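(* Let $\mathcal{X}\subset\mathbb{R}^N$ be convex and compact, and let $f_{t+1}:\mathbb{R}^N\to\mathbb{R}$ be differentiable and convex with $L$-Lipschitz gradient on $\mathcal{X}$, i.e. $\|\nabla f_{t+1}(\mathbf{x})-\nabla f_{t+1}(\mathbf{y})\|\le L\|\mathbf{x}-\mathbf{y}\|$ for all $\mathbf{x},\mathbf{y}\in\mathcal{X}$, where $0<L<\infty$. Let $\bar{\mathbf{x}}_{t+1}\in\mathcal{X}$, and let $\mathbf{g}_t\in\mathbb{R}^N$ and $\epsilon>0$ satisfy $\|\mathbf{g}_t-\nabla f_{t+1}(\bar{\mathbf{x}}_{t+1})\|\le\epsilon$, with $\|\mathbf{g}_t\|>\epsilon$. Let $\delta>0$ and $0<\beta\le 1/L$, and define the predictive update $\mathbf{x}_{t+1}=\mathrm{proj}_{\mathcal{X}}(\bar{\mathbf{x}}_{t+1}-\beta\mathbf{g}_t)$ and $\mathbf{d}_{t+1}=\mathbf{x}_{t+1}-\bar{\mathbf{x}}_{t+1}$. If $$\|\mathbf{d}_{t+1}\|\ge\frac{\epsilon}{L}+\sqrt{\frac{\epsilon^2}{L^2}+\frac{2\delta}{L}},$$ then $f_{t+1}(\mathbf{x}_{t+1})\le f_{t+1}(\bar{\mathbf{x}}_{t+1})-\delta$, i.e. the predictive update strictly improves on the OCO update $\bar{\mathbf{x}}_{t+1}$ by at least $\delta$.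
   Context: $\|\cdot\|$ is the Euclidean norm and $\mathrm{proj}_{\mathcal{X}}(\mathbf{x})\in\arg\min_{\mathbf{y}\in\mathcal{X}}\|\mathbf{x}-\mathbf{y}\|$. In the paper's online setting, $\bar{\mathbf{x}}_{t+1}$ is the decision computed by an online convex optimization (OCO) update at round $t$, and $\mathbf{g}_t$ is an estimate ($\epsilon$-forecaster) of the gradient of the next-round loss $f_{t+1}$ at $\bar{\mathbf{x}}_{t+1}$ with error at most $\epsilon$. *)

From HB Require Import structures.
From mathcomp Require Import all_boot all_order all_algebra.
From mathcomp Require Import all_classical all_reals all_analysis.
Set Implicit Arguments. Unset Strict Implicit. Unset Printing Implicit Defensive.
Import Order.TTheory GRing.Theory Num.Theory.
Import numFieldNormedType.Exports.
Local Open Scope classical_set_scope.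
Local Open Scope ring_scope.

(* Euclidean inner product and Euclidean norm on R^N (the library norm on
   matrices is the sup norm, so we define the Euclidean one explicitly). *)
Definition dotv {R : realType} {N : nat} (u v : 'rV[R]_N) : R :=
  \sum_(i < N) u ord0 i * v ord0 i.
Definition enorm {R : realType} {N : nat} (v : 'rV[R]_N) : R :=
  Num.sqrt (dotv v v).

Definition gradient {R : realType} {N : nat} (f : 'rV[R]_N -> R) (x : 'rV[R]_N)
  : 'rV[R]_N := \row_(i < N) ('d f x : 'rV[R]_N -> R) (delta_mx ord0 i).

Definition convex_setE {R : realType} {N : nat} (X : set 'rV[R]_N) : Prop :=
  forall x y (t : R), X x -> X y -> 0 <= t <= 1 -> X ((1 - t) *: x + t *: y).

Definition convex_fun {R : realType} {N : nat} (f : 'rV[R]_N -> R) : Prop :=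
  forall x y (t : R), 0 <= t <= 1 ->
    f ((1 - t) *: x + t *: y) <= (1 - t) * f x + t * f y.

Definition is_proj {R : realType} {N : nat} (X : set 'rV[R]_N) (z p : 'rV[R]_N)
  : Prop := X p /\ forall y, X y -> enorm (z - p) <= enorm (z - y).

(* Write d = x_{t+1} - xbar and r = |d|.  The variational inequality of the
   projection, tested at xbar, gives beta <g, d> <= -r^2, hence
   <g, d> <= -L r^2 because beta <= 1/L.  The descent lemma for the L-smooth f
   together with |g - grad f(xbar)| <= eps then gives
     f(x_{t+1}) <= f(xbar) + <g, d> + eps r + L r^2/2 <= f(xbar) + eps r - L r^2/2,
   and the hypothesis on r says exactly that r lies beyond the positive root of
   L r^2/2 - eps r - delta. *)

From mathcomp Require Import all_boot all_order all_algebra.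
From mathcomp Require Import all_classical all_reals all_analysis.
From mathcomp Require Import ring lra.
Import Order.TTheory GRing.Theory Num.Theory.
Import numFieldNormedType.Exports.
Local Open Scope ring_scope.

Section EuclideanGeometry.
Context {R : realType} {N : nat}.
Implicit Types (u v w : 'rV[R]_N) (a : R).

Lemma dotvC u v : dotv u v = dotv v u.
Proof. by apply: eq_bigr => i _; rewrite mulrC. Qed.

Lemma dotvDl u v w : dotv (u + v) w = dotv u w + dotv v w.
Proof. by rewrite /dotv -big_split; apply: eq_bigr => i _; rewrite mxE mulrDl. Qed.

Lemma dotvZl a u v : dotv (a *: u) v = a * dotv u v.
Proof. by rewrite /dotv mulr_sumr; apply: eq_bigr => i _; rewrite mxE mulrA. Qed.

Lemma dotvNl u v : dotv (- u) v = - dotv u v.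
Proof. by rewrite -scaleN1r dotvZl mulN1r. Qed.

Lemma dotvBl u v w : dotv (u - v) w = dotv u w - dotv v w.
Proof. by rewrite dotvDl dotvNl. Qed.

Lemma dotvZr a u v : dotv u (a *: v) = a * dotv u v.
Proof. by rewrite dotvC dotvZl dotvC. Qed.

Lemma dotvNr u v : dotv u (- v) = - dotv u v.
Proof. by rewrite dotvC dotvNl dotvC. Qed.

Lemma dotvBr u v w : dotv u (v - w) = dotv u v - dotv u w.
Proof. by rewrite dotvC dotvBl !(dotvC u). Qed.

Lemma dotv0l v : dotv 0 v = 0.
Proof. by apply: big1 => i _; rewrite mxE mul0r. Qed.

Lemma dotv0r u : dotv u 0 = 0.
Proof. by rewrite dotvC dotv0l. Qed.

Lemma dotvv_ge0 u : 0 <= dotv u u.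
Proof. by apply: sumr_ge0 => i _; rewrite -expr2 sqr_ge0. Qed.

Lemma dotvv_eq0 u : dotv u u = 0 -> u = 0.
Proof.
move=> /eqP; rewrite psumr_eq0 => [/allP u0|i _]; last by rewrite -expr2 sqr_ge0.
apply/rowP => i; rewrite mxE; apply/eqP.
by have /implyP/(_ isT) := u0 i (mem_index_enum i); rewrite mulf_eq0 orbb.
Qed.

Lemma enorm_ge0 u : 0 <= enorm u.
Proof. exact: sqrtr_ge0. Qed.

Lemma enorm_sqr u : enorm u ^+ 2 = dotv u u.
Proof. by rewrite sqr_sqrtr // dotvv_ge0. Qed.

Lemma enormN u : enorm (- u) = enorm u.
Proof. by rewrite /enorm dotvNl dotvC dotvNl opprK. Qed.

Lemma enormZ a u : 0 <= a -> enorm (a *: u) = a * enorm u.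
Proof.
move=> a0; rewrite /enorm dotvZl dotvZr mulrA -expr2 sqrtrM ?sqr_ge0 //.
by rewrite sqrtr_sqr ger0_norm.
Qed.

Lemma enorm_eq0 u : enorm u = 0 -> u = 0.
Proof. by move=> u0; apply: dotvv_eq0; rewrite -enorm_sqr u0 expr0n. Qed.

Lemma dotv_le_enorm u v : dotv u v <= enorm u * enorm v.
Proof.
set a := enorm u; set b := enorm v.
have ab0 : 0 <= a * b by rewrite mulr_ge0 ?enorm_ge0.
have := dotvv_ge0 (b *: u - a *: v).
rewrite !(dotvBl, dotvBr, dotvZl, dotvZr) -!enorm_sqr -/a -/b (dotvC v u) => h.
have {h} : 0 <= (a * b) * (a * b - dotv u v) by nra.
have [ab_gt0|] := ltrP 0 (a * b); first by rewrite pmulr_rge0 // subr_ge0.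
move=> ab_le0; have /eqP : a * b = 0 by apply: le_anti; rewrite ab_le0 ab0.
by rewrite mulf_eq0 => /orP[] /eqP/enorm_eq0 ->; rewrite ?dotv0l ?dotv0r.
Qed.
End EuclideanGeometry.

Lemma le0_of_forall_le_mul (R : realFieldType) (a b : R) :
  (forall t, 0 < t <= 1 -> a <= t * b) -> a <= 0.
Proof.
move=> le_ab; apply/ler_addgt0Pr => e e0; rewrite add0r.
have be0 : 0 < e + `|b| by rewrite ltr_wpDr.
set t := e / (e + `|b|).
have t0 : 0 < t by rewrite divr_gt0.
have t1 : t <= 1 by rewrite ler_pdivrMr // mul1r lerDl.
apply: (le_trans (le_ab t _)); first by rewrite t0 t1.
apply: (le_trans (ler_wpM2l (ltW t0) (ler_norm b))).
by rewrite mulrAC ler_pdivrMr // ler_wpM2l ?ltW //; lra.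
Qed.

Lemma convex_combE (R : pzRingType) (V : lmodType R) (t : R) (a b : V) :
  (1 - t) *: a + t *: b = a + t *: (b - a).
Proof. by rewrite scalerBl scale1r -addrA [- _ + _]addrC -scalerBr. Qed.

Lemma is_proj_obtuse {R : realType} {N : nat} {X : set 'rV[R]_N} {z p y : 'rV[R]_N} :
  convex_setE X -> is_proj X z p -> X y -> dotv (z - p) (y - p) <= 0.
Proof.
move=> convX [Xp p_min] Xy.
suff : 2 * dotv (z - p) (y - p) <= 0 by rewrite pmulr_rle0.
apply: (@le0_of_forall_le_mul _ _ (dotv (y - p) (y - p))) => t /andP[t0 t1].
have Xyt : X ((1 - t) *: p + t *: y) by apply: (convX p y t) => //; rewrite ltW.
have := p_min _ Xyt.
have -> : z - ((1 - t) *: p + t *: y) = (z - p) - t *: (y - p).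
  by rewrite convex_combE opprD addrA.
rewrite /enorm ler_sqrt ?dotvv_ge0 //; move: (z - p) (y - p) => u v.
rewrite !(dotvBl, dotvBr, dotvZl, dotvZr) (dotvC v u); nra.
Qed.

Lemma proj_step_dotv_le {R : realType} {N : nat} {X : set 'rV[R]_N}
    {x g p : 'rV[R]_N} {beta : R} :
  convex_setE X -> X x -> is_proj X (x - beta *: g) p ->
  beta * dotv g (p - x) <= - enorm (p - x) ^+ 2.
Proof.
move=> convX Xx proj; have := is_proj_obtuse convX proj Xx.
have -> : x - beta *: g - p = - ((p - x) + beta *: g) by rewrite opprD opprB addrAC.
have -> : x - p = - (p - x) by rewrite opprB.
by rewrite dotvNl dotvNr opprK dotvDl dotvZl (dotvC g) -enorm_sqr; lra.
Qed.

Section Smoothness.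
Context {R : realType} {N : nat}.
Variable f : 'rV[R]_N -> R.

Lemma diff_gradient x v : 'd f x v = dotv (gradient f x) v.
Proof.
rewrite {1}(row_sum_delta v) linear_sum; apply: eq_bigr => i _.
by rewrite linearZ mxE mulrC.
Qed.

Lemma is_derive_line x d t : differentiable f (x + t *: d) ->
  is_derive t 1 (fun s : R => f (x + s *: d)) ('d f (x + t *: d) d).
Proof.
move=> dfx.
have quotE : (fun h : R => h^-1 *: (((fun s => f (x + s *: d)) \o shift t) (h *: 1)
               - f (x + t *: d))) =
             (fun h : R => h^-1 *: ((f \o shift (x + t *: d)) (h *: d) - f (x + t *: d))).
  by apply/funext => h /=; rewrite [h *: 1]mulr1 scalerDl addrCA.
split; first by rewrite /derivable quotE; exact: diff_derivable.
by rewrite /derive quotE -/(derive f (x + t *: d) d) deriveE.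
Qed.

End Smoothness.

Lemma descent_lemma {R : realType} {N : nat} {X : set 'rV[R]_N}
    {f : 'rV[R]_N -> R} {L : R} {x y : 'rV[R]_N} :
  convex_setE X -> (forall z, differentiable f z) ->
  (forall u v, X u -> X v ->
     enorm (gradient f u - gradient f v) <= L * enorm (u - v)) ->
  X x -> X y ->
  f y <= f x + dotv (gradient f x) (y - x) + L / 2 * enorm (y - x) ^+ 2.
Proof.
move=> convX df lipX Xx Xy.
set d := y - x; set c := dotv (gradient f x) d; set K := L / 2 * enorm d ^+ 2.
(* By the Lipschitz bound, [psi s = f (x + s d) - c s - K s^2] has a
   nonpositive derivative on [0, 1], hence [psi 1 <= psi 0]. *)
pose psi : R -> R :=
  (fun s : R => f (x + s *: d)) - (c \*: id + K \*: (@id R) ^+ 2).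
have psi_deriv (s : R) :
    is_derive s 1 psi (dotv (gradient f (x + s *: d)) d - (c + K * (2 * s))).
  have h := is_deriveB (is_derive_line f x d s (df _))
      (is_deriveD (is_deriveZ c (is_derive_id s 1))
                  (is_deriveZ K (is_deriveX 2 (is_derive_id s 1)))).
  rewrite /psi; apply: (is_derive_eq h).
  by rewrite diff_gradient [c%:A]mulr1 [(2 * _)%:A]mulr1 expr1.
have psi'_le0 (s : R) : 0 <= s <= 1 ->
    dotv (gradient f (x + s *: d)) d - (c + K * (2 * s)) <= 0.
  case/andP=> s0 s1.
  have Xs : X (x + s *: d).
    by rewrite -convex_combE; apply: (convX x y s) => //; rewrite s0.
  have := lipX _ _ Xs Xx.
  have -> : x + s *: d - x = s *: d by rewrite addrC addKr.
  rewrite enormZ // => lip.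
  rewrite subr_le0 -lerBlDl /c -dotvBl.
  apply: (le_trans (dotv_le_enorm _ _)).
  have -> : K * (2 * s) = L * (s * enorm d) * enorm d by rewrite /K; field.
  by rewrite ler_wpM2r // enorm_ge0.
have psi_derivable (s : R) : derivable psi s 1 by case: (psi_deriv s).
have : psi 1 <= psi 0.
  apply: (ler0_derive1_le_cc (a := 0) (b := 1)); rewrite ?bound_itvE //.
  - move=> s; rewrite in_itv /= => /andP[s0 s1].
    by rewrite derive1E; case: (psi_deriv s) => _ ->; rewrite psi'_le0 // !ltW.
  - by apply: derivable_within_continuous => s _.
rewrite /psi /= !fctE /=.
have -> : x + 1 *: d = y by rewrite scale1r addrC subrK.
rewrite scale0r addr0 expr1n expr0n !scaler0 [c%:A]mulr1 [K%:A]mulr1; lra.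
Qed.

Lemma quadratic_ge_beyond_root {R : rcfType} {L eps delta r : R} :
  0 < L -> 0 <= delta ->
  eps / L + Num.sqrt (eps ^+ 2 / L ^+ 2 + 2 * delta / L) <= r ->
  eps * r + delta <= L / 2 * r ^+ 2.
Proof.
move=> L0 delta0.
set a := eps / L; set s := Num.sqrt _ => far; set q := delta / L.
have eps_aL : eps = a * L by rewrite /a divfK ?gt_eqF.
have delta_qL : delta = q * L by rewrite /q divfK ?gt_eqF.
have s0 : 0 <= s by rewrite sqrtr_ge0.
have s2 : s ^+ 2 = a ^+ 2 + 2 * q.
  rewrite sqr_sqrtr; first by rewrite /a /q expr_div_n mulrA.
  by rewrite addr_ge0 ?divr_ge0 ?sqr_ge0 ?mulr_ge0 ?(ltW L0).
have beyond : 2 * q <= r ^+ 2 - 2 * a * r.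
  have : 0 <= (r - a - s) * (r - a + s) by apply: mulr_ge0; lra.
  nra.
rewrite eps_aL delta_qL; nra.
Qed.

Theorem lemma3 (R : realType) (N : nat) (X : set 'rV[R]_N)
  (f : 'rV[R]_N -> R) (L eps delta beta : R)
  (xbar g xnext : 'rV[R]_N) :
  convex_setE X -> compact X ->
  (forall x : 'rV[R]_N, differentiable f x) ->
  convex_fun f ->
  0 < L ->
  (forall x y, X x -> X y ->
     enorm (gradient f x - gradient f y) <= L * enorm (x - y)) ->
  X xbar ->
  0 < eps ->
  enorm (g - gradient f xbar) <= eps ->
  eps < enorm g ->
  0 < delta ->
  0 < beta -> beta <= L^-1 ->
  is_proj X (xbar - beta *: g) xnext ->
  eps / L + Num.sqrt (eps ^+ 2 / L ^+ 2 + 2 * delta / L) <= enorm (xnext - xbar) ->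
  f xnext <= f xbar - delta.
Proof.
move=> convX _ df _ L0 lipX Xxbar _ g_err _ delta0 beta0 beta_le proj far.
have Xxnext : X xnext by case: proj.
have descent := descent_lemma convX df lipX Xxbar Xxnext.
have beyond := quadratic_ge_beyond_root L0 (ltW delta0) far.
have proj_step := proj_step_dotv_le convX Xxbar proj.
set d := xnext - xbar in descent beyond proj_step.
have betaL : beta * L <= 1 by rewrite -ler_pdivlMr // div1r.
have gd : dotv g d <= - (L * enorm d ^+ 2) by nra.
have grad_err : dotv (gradient f xbar) d <= dotv g d + eps * enorm d.
  rewrite -lerBlDl -dotvBl; apply: (le_trans (dotv_le_enorm _ _)).
  by rewrite -enormN opprB ler_wpM2r ?enorm_ge0.
lra.
Qed.
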